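(* Let $\bar A\in\{0,1\}^{n\times n}$, $\bar S\in\{0,1\}^{n\times q}$, and let $\mathcal B(\bar A,\bar S)$, $\mathcal B(\bar A)$, $\mathcal B(\bar S)$ be as in the context. Define $$t=\max\{|F| : F \text{ a matching of } \mathcal B(\bar S),\ \mathcal R(F)\subseteq \mathcal U_R(M') \text{ for some maximum matching } M' \text{ of } \mathcal B(\bar A)\}.$$ Let $M^*$ be a maximum matching of $\mathcal B(\bar A,\bar S)$ and set $M_{\bar A}=M^*\cap\mathcal E_{\mathcal X,\mathcal X}$, $M_{\bar S}=M^*\cap\mathcal E_{\mathcal S,\mathcal X}$. Then $M^*=M_{\bar S}\cup M_{\bar A}$, $M_{\bar A}$ and $M_{\bar S}$ are disjoint matchings of $\mathcal B(\bar A)$ and $\mathcal B(\bar S)$ respectively, $\mathcal R(M_{\bar S})\subseteq\mathcal U_R(M_{\bar A})$, and $M_{\bar S}$ contains a largest collection of edges incoming into the set of right-unmatched vertices of some maximum matching of $\mathcal B(\bar A)$; that is, there exist a maximum matching $M'$ of $\mathcal B(\bar A)$ and a subset $E\subseteq M_{\bar S}$ with $\mathcal R(E)\subseteq\mathcal U_R(M')$ and $|E|=t$.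
   Context: State variables $\mathcal X=\{x_1,\dots,x_n\}$, slack variables $\mathcal S=\{s_1,\dots,s_q\}$. $\mathcal B(\bar A,\bar S)$ is the bipartite graph with left vertex set $\mathcal X\cup\mathcal S$, right vertex set $\mathcal X$ (left and right copies of $\mathcal X$ are distinct vertices), and edge set $\mathcal E_{\mathcal X,\mathcal X}\cup\mathcal E_{\mathcal S,\mathcal X}$, where $\mathcal E_{\mathcal X,\mathcal X}=\{(x_i,x_j):\bar A_{ji}\neq 0\}$ and $\mathcal E_{\mathcal S,\mathcal X}=\{(s_k,x_j):\bar S_{jk}\neq0\}$ (first endpoint left, second right). $\mathcal B(\bar A)$ is the subgraph with left vertices $\mathcal X$ and edges $\mathcal E_{\mathcal X,\mathcal X}$; $\mathcal B(\bar S)$ is the subgraph with left vertices $\mathcal S$ and edges $\mathcal E_{\mathcal S,\mathcal X}$; both have right vertex set $\mathcal X$. A matching is a set of edges no two sharing a left endpoint or a right endpoint; a maximum matching is one of largest cardinality. $\mathcal R(E)$ is the set of right endpoints of the edges in $E$. For a matching $M$, $\mathcal U_R(M)$ is the set of right vertices not covered by $M$. *)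

From HB Require Import structures.
From mathcomp Require Import all_boot.
Set Implicit Arguments. Unset Strict Implicit. Unset Printing Implicit Defensive.

(* Left vertices: X + S, encoded as 'I_n + 'I_q (inl i = x_i, inr k = s_k).
   Right vertices: X, encoded as 'I_n.  An edge is a pair (left, right). *)
Definition edge (n q : nat) : finType := (('I_n + 'I_q)%type * 'I_n)%type.

Definition EXX n q (A : 'I_n -> 'I_n -> bool) : {set edge n q} :=
  [set e : edge n q | if e.1 is inl i then A e.2 i else false].

Definition ESX n q (S : 'I_n -> 'I_q -> bool) : {set edge n q} :=
  [set e : edge n q | if e.1 is inr k then S e.2 k else false].

Definition EAS n q (A : 'I_n -> 'I_n -> bool) (S : 'I_n -> 'I_q -> bool) : {set edge n q} :=
  EXX q A :|: ESX S.

Definition matching (T U : finType) (E M : {set (T * U)%type}) : bool :=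
  (M \subset E) &&
  [forall e1 in M, forall e2 in M,
     ((e1.1 == e2.1) || (e1.2 == e2.2)) ==> (e1 == e2)].

Definition maximum_matching (T U : finType) (E M : {set (T * U)%type}) : bool :=
  matching E M && [forall M' : {set (T * U)%type}, matching E M' ==> (#|M'| <= #|M|)].

Definition Rends (T U : finType) (E : {set (T * U)%type}) : {set U} :=
  [set e.2 | e in E].

Definition UR (T U : finType) (M : {set (T * U)%type}) : {set U} :=
  ~: Rends M.

Definition tmax n q (A : 'I_n -> 'I_n -> bool) (S : 'I_n -> 'I_q -> bool) : nat :=
  \max_(F : {set edge n q} |
          matching (ESX S) F &&
          [exists M' : {set edge n q},
             maximum_matching (EXX q A) M' && (Rends F \subset UR M')])
     #|F|.

From HB Require Import structures.
From mathcomp Require Import all_boot.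
From mathcomp Require Import zify.

Set Implicit Arguments. Unset Strict Implicit. Unset Printing Implicit Defensive.

(* Edges of B(A) and of B(S) never share a left endpoint, which gives the
   decomposition of M* into the matchings M_A and M_S with disjoint right ends.
   By an exchange argument there is a maximum matching M' of B(A) covering every
   right vertex covered by M_A; let E be the part of M_S entering U_R(M').  The
   other edges of M_S end in R(M') minus R(M_A), so |E| >= |M_S| + |M_A| - |M'|.
   An optimal F together with its maximum matching is a matching of B(A,S), so
   t + |M'| <= |M*| = |M_S| + |M_A| <= |E| + |M'|; and |E| <= t as E is feasible. *)

Section Matchings.

Variables T U : finType.
Implicit Types E M N : {set (T * U)%type}.

Lemma matchingP E M :
  reflect (M \subset E /\
           {in M &, forall e f, (e.1 == f.1) || (e.2 == f.2) -> e = f})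
          (matching E M).
Proof.
apply: (iffP andP) => -[sME injM]; split=> //.
  move=> e f eM fM; move/forall_inP/(_ e eM)/forall_inP/(_ f fM): injM.
  by move=> /implyP ef /ef /eqP.
apply/forall_inP=> e eM; apply/forall_inP=> f fM.
by apply/implyP=> /(injM e f eM fM) ->.
Qed.

Lemma matching_sub E M : matching E M -> M \subset E.
Proof. by case/matchingP. Qed.

Lemma matching_eq E M e f : matching E M -> e \in M -> f \in M ->
  (e.1 == f.1) || (e.2 == f.2) -> e = f.
Proof. by case/matchingP=> _; apply. Qed.

Lemma matching0 E : matching E set0.
Proof. by apply/matchingP; split=> [|e]; rewrite ?sub0set ?inE. Qed.

Lemma matchingS E E' M M' :
  matching E M -> M' \subset M -> M' \subset E' -> matching E' M'.
Proof.
move=> mM sM'M sM'E'; apply/matchingP; split=> // e f eM' fM'.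
by apply: (matching_eq mM); apply: (subsetP sM'M).
Qed.

Lemma matchingI E E' M : matching E M -> matching E' (M :&: E').
Proof. by move=> mM; apply: matchingS mM (subsetIl _ _) (subsetIr _ _). Qed.

Lemma card_Rends E M : matching E M -> #|Rends M| = #|M|.
Proof.
move=> mM; apply: card_in_imset => e f eM fM ef.
by apply: (matching_eq mM) => //; rewrite ef eqxx orbT.
Qed.

Lemma mem_Rends M e : e \in M -> e.2 \in Rends M.
Proof. exact: imset_f. Qed.

Lemma card_matchings_le E1 E2 E3 M1 M2 M3 :
    matching E1 M1 -> matching E2 M2 -> matching E3 M3 ->
    [disjoint Rends M1 & Rends M2] ->
    Rends M1 \subset Rends M3 -> Rends M2 \subset Rends M3 ->
  #|M1| + #|M2| <= #|M3|.
Proof.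
move=> m1 m2 m3 disj s1 s3.
rewrite -(card_Rends m1) -(card_Rends m2) -(card_Rends m3) -cardsUI.
move: disj; rewrite -setI_eq0 => /eqP ->; rewrite cards0 addn0.
by apply: subset_leq_card; rewrite subUset s1 s3.
Qed.

Lemma maximum_matchingP E M :
  reflect (matching E M /\ forall N, matching E N -> #|N| <= #|M|)
          (maximum_matching E M).
Proof.
apply: (iffP andP) => -[mM maxM]; split=> //.
  by move=> N; move/forallP/(_ N)/implyP: maxM.
by apply/forallP=> N; apply/implyP/maxM.
Qed.

Lemma exists_maximum_matching E : exists M, maximum_matching E M.
Proof.
have [M mM maxM] := arg_maxnP (fun M => #|M|) (matching0 E).
by exists M; apply/maximum_matchingP.
Qed.

Lemma maximum_matchingW E M : maximum_matching E M -> matching E M.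
Proof. by case/maximum_matchingP. Qed.

Lemma maximum_matching_card E M N :
  maximum_matching E M -> maximum_matching E N -> #|M| = #|N|.
Proof.
move=> /maximum_matchingP[mM maxM] /maximum_matchingP[mN maxN].
by apply/eqP; rewrite eqn_leq maxN ?maxM.
Qed.

Definition exchange M (e : T * U) : {set T * U} := e |: [set f in M | f.1 != e.1].

Lemma matching_exchange E M e :
  matching E M -> e \in E -> e.2 \notin Rends M -> matching E (exchange M e).
Proof.
move=> mM eE eRM; have sME := matching_sub mM.
have f_neq f : f \in M -> f.2 != e.2.
  by move=> fM; apply: contraNneq eRM => <-; apply: mem_Rends.
apply/matchingP; split.
  rewrite subUset sub1set eE; apply/subsetP=> f; rewrite inE => /andP[fM _].
  exact: (subsetP sME).
move=> f g; rewrite !inE.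
move=> /predU1P[-> | /andP[fM fe]] /predU1P[-> | /andP[gM ge]] //.
- by rewrite eq_sym (negbTE ge) eq_sym (negbTE (f_neq g gM)).
- by rewrite (negbTE fe) (negbTE (f_neq f fM)).
- exact: (matching_eq mM).
Qed.

Lemma card_exchange E M e :
  matching E M -> e.2 \notin Rends M -> #|M| <= #|exchange M e|.
Proof.
move=> mM eRM; have eM : e \notin M by apply: contra eRM; apply: mem_Rends.
have same_left : #|[set f in M | f.1 == e.1]| <= 1.
  apply/card_le1_eqP=> f g; rewrite !inE => /andP[fM /eqP fe] /andP[gM /eqP ge].
  by apply: (matching_eq mM gM fM); rewrite fe ge eqxx.
rewrite cardsU1 inE (negbTE eM) /= -(cardsID [set f | f.1 == e.1] M).
have -> : M :&: [set f | f.1 == e.1] = [set f in M | f.1 == e.1].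
  by apply/setP=> f; rewrite !inE.
have -> : M :\: [set f | f.1 == e.1] = [set f in M | f.1 != e.1].
  by apply/setP=> f; rewrite !inE andbC.
by apply: leq_trans (leq_add same_left (leqnn _)) _; rewrite add1n.
Qed.

Lemma maximum_matching_exchange E M e :
  maximum_matching E M -> e \in E -> e.2 \notin Rends M ->
  maximum_matching E (exchange M e).
Proof.
move=> /maximum_matchingP[mM maxM] eE eRM; apply/maximum_matchingP.
split=> [|N mN]; first exact: matching_exchange.
exact: leq_trans (maxM N mN) (card_exchange mM eRM).
Qed.

(* Among maximum matchings take one sharing the most edges with [N]; an edge of
   [N] reaching an uncovered right vertex could be exchanged into it. *)
Lemma maximum_matching_cover E N :
  matching E N -> exists2 M, maximum_matching E M & Rends N \subset Rends M.
Proof.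
move=> mN; have [M0 maxM0] := exists_maximum_matching E.
have [M maxM bestM] := arg_maxnP (fun M => #|M :&: N|) maxM0.
exists M => //; apply/subsetP=> _ /imsetP[e eN ->]; apply/negPn/negP => eRM.
have eE : e \in E by apply: (subsetP (matching_sub mN)).
have eM : e \notin M by apply: contra eRM; apply: mem_Rends.
suff : #|M :&: N| < #|exchange M e :&: N|.
  by rewrite ltnNge => /negP; apply; apply: bestM; apply: maximum_matching_exchange.
have sub : e |: (M :&: N) \subset exchange M e :&: N.
  apply/subsetP=> f; rewrite !inE => /predU1P[-> | /andP[fM fN]].
    by rewrite eqxx eN.
  rewrite fM fN andbT; apply/orP; right; apply: contraNneq eM => fe.
  by rewrite -(matching_eq mN fN eN) ?fe ?eqxx.
by apply: leq_trans (subset_leq_card sub); rewrite cardsU1 inE (negbTE eM).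
Qed.

End Matchings.

Section SeparatedEdgeSets.

Variables T U : finType.
Variables E1 E2 : {set (T * U)%type}.
Hypothesis left_sep : {in E1 & E2, forall e f, e.1 != f.1}.
Implicit Types M F : {set (T * U)%type}.

Definition feasible F :=
  matching E2 F && [exists M, maximum_matching E1 M && (Rends F \subset UR M)].

Definition tvalue := \max_(F | feasible F) #|F|.

Lemma disjoint_sep : [disjoint E1 & E2].
Proof.
apply/pred0P=> e /=; apply/negbTE; apply/andP=> -[eE1 eE2].
by move: (left_sep eE1 eE2); rewrite eqxx.
Qed.

Lemma cardsU_sep M1 M2 :
  M1 \subset E1 -> M2 \subset E2 -> #|M1 :|: M2| = #|M1| + #|M2|.
Proof.
move=> s1 s2; rewrite cardsU.
suff /eqP -> : M1 :&: M2 == set0 by rewrite cards0 subn0.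
by rewrite setI_eq0 (disjointWl s1) // (disjointWr s2) // disjoint_sep.
Qed.

Lemma matchingU_sep M1 M2 :
    matching E1 M1 -> matching E2 M2 -> [disjoint Rends M1 & Rends M2] ->
  matching (E1 :|: E2) (M1 :|: M2).
Proof.
move=> m1 m2 disjR; have s1 := matching_sub m1; have s2 := matching_sub m2.
have cross e f : e \in M1 -> f \in M2 -> (e.1 == f.1) || (e.2 == f.2) = false.
  move=> eM1 fM2; apply/negbTE; rewrite negb_or.
  rewrite left_sep ?(subsetP s1) ?(subsetP s2) //=.
  apply: contraTneq disjR => ef; apply/pred0Pn; exists e.2.
  by rewrite /= mem_Rends // ef mem_Rends.
apply/matchingP; split; first exact: setUSS.
move=> e f; rewrite !inE => /orP[eM | eM] /orP[fM | fM].
- exact: (matching_eq m1).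
- by rewrite cross.
- by rewrite eq_sym (eq_sym e.2) cross.
- exact: (matching_eq m2).
Qed.

Lemma feasible_card_le M M1 F :
    maximum_matching (E1 :|: E2) M -> maximum_matching E1 M1 -> feasible F ->
  #|F| + #|M1| <= #|M|.
Proof.
move=> /maximum_matchingP[_ maxM] maxM1.
case/andP=> mF /existsP[M1' /andP[maxM1' RF]].
have m1' := maximum_matchingW maxM1'.
rewrite (maximum_matching_card maxM1 maxM1') addnC -cardsU_sep ?matching_sub //.
apply/maxM/matchingU_sep => //.
by rewrite disjoint_sym disjoints_subset.
Qed.

Lemma leq_tvalue F : feasible F -> #|F| <= tvalue.
Proof. exact: leq_bigmax_cond. Qed.

Lemma tvalue_attained : exists2 F, feasible F & #|F| = tvalue.
Proof.
have [M maxM] := exists_maximum_matching E1.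
have feas0 : feasible set0.
  rewrite /feasible matching0; apply/existsP; exists M; rewrite maxM /=.
  by apply/subsetP=> y /imsetP[e]; rewrite inE.
have [|F feasF maxF] := @eq_bigmax_cond _ feasible (fun F => #|F|).
  by apply/card_gt0P; exists set0.
by exists F => //; apply: esym.
Qed.

Lemma split_sep M : M \subset E1 :|: E2 -> M = (M :&: E2) :|: (M :&: E1).
Proof. by move/setIidPl; rewrite setIUr setUC. Qed.

Lemma disjoint_split_sep M : [disjoint M :&: E1 & M :&: E2].
Proof.
by rewrite (disjointWl (subsetIr _ _)) // (disjointWr (subsetIr _ _)) // disjoint_sep.
Qed.

Lemma disjoint_Rends_split_sep M :
  matching (E1 :|: E2) M -> [disjoint Rends (M :&: E1) & Rends (M :&: E2)].
Proof.
move=> mM; rewrite -setI_eq0; apply/eqP/setP=> y; rewrite in_setI in_set0.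
apply/negP=> /andP[/imsetP[e eM1 ye] /imsetP[f fM2 yf]].
have ef : e = f.
  apply: (matching_eq mM (subsetP (subsetIl _ _) e eM1)
                         (subsetP (subsetIl _ _) f fM2)).
  by rewrite -ye -yf eqxx orbT.
by move/pred0P/(_ e): (disjoint_split_sep M); rewrite /= eM1 ef fM2.
Qed.

Lemma maximum_matching_tvalue M :
  maximum_matching (E1 :|: E2) M ->
  exists2 M', maximum_matching E1 M' &
    exists E : {set T * U},
      [/\ E \subset M :&: E2, Rends E \subset UR M' & #|E| = tvalue].
Proof.
move=> maxM; have mM := maximum_matchingW maxM.
have m1 := matchingI E1 mM; have m2 := matchingI E2 mM.
have [M' maxM' cover1] := maximum_matching_cover m1.
set C := [set e : T * U | e.2 \in Rends M'].
set E := M :&: E2 :\: C.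
have RE : Rends E \subset UR M'.
  by apply/subsetP=> y /imsetP[e]; rewrite !inE => /andP[eC _] ->.
exists M' => //; exists E; split=> //; first exact: subsetDl.
have mE : matching E2 E.
  apply: matchingS m2 (subsetDl _ _) (subset_trans (subsetDl _ _) _).
  exact: subsetIr.
have feasE : feasible E.
  by rewrite /feasible mE; apply/existsP; exists M'; rewrite maxM' RE.
have [F feasF tvalueF] := tvalue_attained.
have cardF := feasible_card_le maxM maxM' feasF.
have cardM : #|M| = #|M :&: E2| + #|M :&: E1|.
  by rewrite {1}(split_sep (matching_sub mM)) setUC cardsU_sep ?subsetIr // addnC.
have cardC : #|M :&: E2 :&: C| + #|M :&: E1| <= #|M'|.
  apply: (card_matchings_le (matchingS m2 (subsetIl _ _) (subsetIl _ _)) m1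
           (maximum_matchingW maxM')) => //.
  - rewrite disjoint_sym (disjointWr (imsetS _ (subsetIl _ _))) //.
    exact: disjoint_Rends_split_sep.
  - apply/subsetP=> y /imsetP[e]; rewrite inE => /andP[_].
    by rewrite inE => eC ->.
have cardE : #|M :&: E2 :&: C| + #|E| = #|M :&: E2| := cardsID C _.
have := leq_tvalue feasE; rewrite -tvalueF; lia.
Qed.

End SeparatedEdgeSets.

Lemma EXX_ESX_left_sep n q (A : 'I_n -> 'I_n -> bool) (S : 'I_n -> 'I_q -> bool) :
  {in EXX q A & ESX S, forall e f, e.1 != f.1}.
Proof. by move=> [[i|k] j] [[i'|k'] j']; rewrite !inE. Qed.

Theorem lemma2 (n q : nat) (A : 'I_n -> 'I_n -> bool) (S : 'I_n -> 'I_q -> bool)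
  (Mstar : {set edge n q}) :
  maximum_matching (EAS A S) Mstar ->
  let MA := Mstar :&: EXX q A in
  let MS := Mstar :&: ESX S in
  [/\ Mstar = MS :|: MA /\ [disjoint MA & MS],
      matching (EXX q A) MA,
      matching (ESX S) MS,
      Rends MS \subset UR MA &
      exists M' : {set edge n q}, maximum_matching (EXX q A) M' /\
        exists E : {set edge n q},
          [/\ E \subset MS, Rends E \subset UR M' & #|E| = tmax A S]].
Proof.
move=> maxM MA MS; have sep := @EXX_ESX_left_sep n q A S.
have mM := maximum_matchingW maxM.
split.
- by split; [exact: split_sep (matching_sub mM) | exact: disjoint_split_sep].
- exact: matchingI mM.
- exact: matchingI mM.
- by rewrite /UR -disjoints_subset disjoint_sym disjoint_Rends_split_sep.
have [M' maxM' [E [sE RE cardE]]] := maximum_matching_tvalue sep maxM.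
by exists M'; split=> //; exists E.
Qed.
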